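(* Fix $t\in[0,1/2]$. Let $A,B,S,T\subset[n]$ be pairwise disjoint and let $F,G:\{0,1\}^n\times\{0,1\}^n\to\mathbb R$ be such that $F(\omega,\omega_t)$ is measurable with respect to $\{(\omega(x),\omega_t(x)):x\in A\cup S\cup T\}$, $G(\omega,\omega_t)$ is measurable with respect to $\{(\omega(x),\omega_t(x)):x\in B\cup S\cup T\}$, and $F,G$ are both $S$-increasing and $T$-decreasing. Then $$\mathbb E[F(\omega,\omega_t)G(\omega,\omega_t)]\ge\mathbb E[F(\omega,\omega_t)]\,\mathbb E[G(\omega,\omega_t)].$$
   Context: $\omega$ is uniform on $\{0,1\}^n$ and $\omega_t$ is obtained from $\omega$ by flipping each coordinate independently with probability $t$. $x^i$ (resp. $x_i$) is $x$ with $i$-th coordinate set to $1$ (resp. $0$). For $S\subset[n]$, $F$ is $S$-increasing if for all $x,y\in\{0,1\}^n$ and all $i\in S$: $F(x^i,y)\ge F(x_i,y)$ and $F(x,y^i)\ge F(x,y_i)$; $F$ is $T$-decreasing if for all $x,y$ and $i\in T$: $F(x^i,y)\le F(x_i,y)$ and $F(x,y^i)\le F(x,y_i)$. *)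

From mathcomp Require Import all_boot all_order all_algebra.
Set Implicit Arguments. Unset Strict Implicit. Unset Printing Implicit Defensive.
Import Order.TTheory GRing.Theory Num.Theory.
Local Open Scope ring_scope.

Notation config n := {ffun 'I_n -> bool}.

(* setc x i b : x with i-th coordinate set to b  (x^i = setc x i true,
   x_i = setc x i false). *)
Definition setc (n : nat) (x : config n) (i : 'I_n) (b : bool) : config n :=
  [ffun j => if j == i then b else x j].

(* Joint law of (omega, omega_t): omega uniform, each coordinate flipped
   independently with probability t. *)
Definition pjoint (R : realFieldType) (n : nat) (t : R) (x y : config n) : R :=
  (2%:R ^- n) * \prod_(i < n) (if x i == y i then 1 - t else t).

Definition Ejoint (R : realFieldType) (n : nat) (t : R)
  (H : config n -> config n -> R) : R :=
  \sum_(x : config n) \sum_(y : config n) pjoint t x y * H x y.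

(* H(omega, omega_t) is measurable w.r.t. {(omega(x), omega_t(x)) : x in D}:
   H depends only on the coordinates in D of both arguments. *)
Definition depends_only (R : Type) (n : nat) (D : {set 'I_n})
  (H : config n -> config n -> R) : Prop :=
  forall x y x' y' : config n,
    (forall i, i \in D -> x i = x' i /\ y i = y' i) -> H x y = H x' y'.

Definition S_increasing (R : realFieldType) (n : nat) (S : {set 'I_n})
  (H : config n -> config n -> R) : Prop :=
  forall (x y : config n) (i : 'I_n), i \in S ->
    H (setc x i true) y >= H (setc x i false) y /\
    H x (setc y i true) >= H x (setc y i false).

Definition T_decreasing (R : realFieldType) (n : nat) (T : {set 'I_n})
  (H : config n -> config n -> R) : Prop :=
  forall (x y : config n) (i : 'I_n), i \in T ->
    H (setc x i true) y <= H (setc x i false) y /\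
    H x (setc y i true) <= H x (setc y i false).

From mathcomp Require Import all_boot all_order all_algebra.
From mathcomp Require Import ring lra.
Import Order.TTheory GRing.Theory Num.Theory.
Set Implicit Arguments. Unset Strict Implicit. Unset Printing Implicit Defensive.
Local Open Scope ring_scope.

(* The pairs (omega(i), omega_t(i)) are i.i.d. with a law on {0,1}^2 putting mass
   (1-t)/2 on the diagonal and t/2 off it, so the claim is a Harris inequality for a
   product measure.  It is proved by integrating out one coordinate at a time: the
   partial expectations of F and G stay within a convex cone of functions whose
   one-coordinate sections are positively correlated.  For a coordinate in S (or T)
   both sections are increasing (or decreasing) in each of the two bits, and for
   t <= 1/2 the law of the pair is log-supermodular, whence the correlation
   (four-point inequality); any other coordinate lies outside A or outside B, so one
   of the two sections is constant. *)

Section ProductMeasure.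

Variables (R : realFieldType) (K : finType) (mu : K -> R) (n : nat).
Hypotheses (mu_ge0 : forall k, 0 <= mu k) (mu_sum1 : \sum_k mu k = 1).

Local Notation conf := {ffun 'I_n -> K}.

Definition set_coord (w : conf) (i : 'I_n) (k : K) : conf :=
  [ffun j => if j == i then k else w j].

Definition splice (U : {set 'I_n}) (w z : conf) : conf :=
  [ffun j => if j \in U then w j else z j].

Definition prod_mass (w : conf) : R := \prod_j mu (w j).

Definition condE (U : {set 'I_n}) (H : conf -> R) (z : conf) : R :=
  \sum_w prod_mass w * H (splice U w z).

Lemma set_coord_id (w : conf) i k : w i = k -> set_coord w i k = w.
Proof. by move=> wi; apply/ffunP => j; rewrite ffunE; case: eqP => // ->. Qed.

Lemma set_coordK (w : conf) i a b : set_coord (set_coord w i a) i b = set_coord w i b.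
Proof. by apply/ffunP => j; rewrite !ffunE; case: eqP. Qed.

Lemma splice_set_coord (U : {set 'I_n}) (w z : conf) i k : i \notin U ->
  splice U w (set_coord z i k) = set_coord (splice U w z) i k.
Proof.
move=> iU; apply/ffunP => j; rewrite !ffunE.
by case: (eqVneq j i) => [->|//]; rewrite (negbTE iU).
Qed.

Lemma splice_setU1 (U : {set 'I_n}) (w z : conf) i k : i \notin U ->
  splice (i |: U) (set_coord w i k) z = splice U w (set_coord z i k).
Proof.
move=> iU; apply/ffunP => j; rewrite !ffunE in_setU1.
by case: (eqVneq j i) => [->|//]; rewrite (negbTE iU).
Qed.

Lemma prod_mass_ge0 (w : conf) : 0 <= prod_mass w.
Proof. exact: prodr_ge0. Qed.

Lemma prod_mass_sum1 : \sum_(w : conf) prod_mass w = 1.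
Proof.
rewrite /prod_mass -(bigA_distr_bigA (fun (_ : 'I_n) k => mu k)) /=.
by rewrite big1.
Qed.

Lemma sum_set_coord_fiber (F : conf -> R) (i : 'I_n) (k k' : K) :
  \sum_(w : conf | w i == k') F (set_coord w i k) = \sum_(w : conf | w i == k) F w.
Proof.
symmetry; rewrite (reindex_onto (fun w => set_coord w i k)
                                (fun w => set_coord w i k')) /=; last first.
  by move=> w /eqP wk; rewrite set_coordK set_coord_id.
apply: eq_bigl => w; rewrite ffunE eqxx set_coordK eqxx /=.
apply/eqP/eqP => [<-|wk']; first by rewrite ffunE eqxx.
exact: set_coord_id.
Qed.

Lemma sum_prod_mass_set_coord (Y : conf -> R) i :
  \sum_w prod_mass w * Y w = \sum_k mu k * \sum_w prod_mass w * Y (set_coord w i k).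
Proof.
pose rest (w : conf) := \prod_(j | j != i) mu (w j).
have mass_split w : prod_mass w = mu (w i) * rest w by rewrite /prod_mass (bigD1 i).
have rest_set w k : rest (set_coord w i k) = rest w.
  by apply: eq_bigr => j /negbTE ji; rewrite ffunE ji.
rewrite (partition_big (fun w : conf => w i) xpredT) //=; apply: eq_bigr => k _.
transitivity (mu k * \sum_(w : conf | w i == k) rest w * Y w).
  by rewrite big_distrr /=; apply: eq_bigr => w /eqP wk; rewrite mass_split wk mulrA.
congr (_ * _); symmetry.
rewrite (partition_big (fun w : conf => w i) xpredT) //= -[RHS]mul1r -mu_sum1.
rewrite big_distrl /=; apply: eq_bigr => k' _.
rewrite -(sum_set_coord_fiber _ i k k') big_distrr /=.
by apply: eq_bigr => w /eqP wk'; rewrite rest_set mass_split wk' mulrA.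
Qed.

Lemma condE_set0 H (z : conf) : condE set0 H z = H z.
Proof.
rewrite /condE (eq_bigr (fun w => prod_mass w * H z)) => [|w _]; last first.
  by congr (_ * H _); apply/ffunP => j; rewrite !ffunE inE.
by rewrite -big_distrl /= prod_mass_sum1 mul1r.
Qed.

Lemma condE_setT H (z : conf) : condE setT H z = \sum_w prod_mass w * H w.
Proof.
by apply: eq_bigr => w _; congr (_ * H _); apply/ffunP => j; rewrite !ffunE inE.
Qed.

Lemma condE_set_coord (U : {set 'I_n}) H (z : conf) i k : i \notin U ->
  condE U H (set_coord z i k) = \sum_w prod_mass w * H (set_coord (splice U w z) i k).
Proof. by move=> iU; apply: eq_bigr => w _; rewrite splice_set_coord. Qed.

Lemma condE_setU1 (U : {set 'I_n}) H (z : conf) i : i \notin U ->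
  condE (i |: U) H z =
  \sum_k mu k * \sum_w prod_mass w * H (set_coord (splice U w z) i k).
Proof.
move=> iU; rewrite /condE (sum_prod_mass_set_coord _ i).
apply: eq_bigr => k _; congr (_ * _); apply: eq_bigr => w _.
by rewrite splice_setU1 // splice_set_coord.
Qed.

Lemma mean_mul_const_l (f g : K -> R) c : (forall k, f k = c) ->
  \sum_k mu k * (f k * g k) = (\sum_k mu k * f k) * (\sum_k mu k * g k).
Proof.
move=> fc; have -> : \sum_k mu k * f k = c.
  by under eq_bigr do rewrite fc; rewrite -big_distrl /= mu_sum1 mul1r.
by rewrite big_distrr /=; apply: eq_bigr => k _; rewrite fc mulrCA.
Qed.

Lemma mean_mul_const_r (f g : K -> R) c : (forall k, g k = c) ->
  \sum_k mu k * (f k * g k) = (\sum_k mu k * f k) * (\sum_k mu k * g k).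
Proof.
move=> gc; rewrite [RHS]mulrC -(mean_mul_const_l f gc).
by apply: eq_bigr => k _; rewrite [f k * _]mulrC.
Qed.

Section Harris.

Variable C : 'I_n -> (K -> R) -> (K -> R) -> Prop.
Hypothesis C_cone : forall i (c : conf -> R) (f g : conf -> K -> R),
  (forall w, 0 <= c w) -> (forall w, C i (f w) (g w)) ->
  C i (fun k => \sum_w c w * f w k) (fun k => \sum_w c w * g w k).
Hypothesis C_correlated : forall i f g, C i f g ->
  (\sum_k mu k * f k) * (\sum_k mu k * g k) <= \sum_k mu k * (f k * g k).

Variables F G : conf -> R.
Hypothesis FG_sections : forall i z,
  C i (fun k => F (set_coord z i k)) (fun k => G (set_coord z i k)).

Lemma condE_correlated (U : {set 'I_n}) z :
  condE U F z * condE U G z <= condE U (fun w => F w * G w) z.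
Proof.
have [m] := ubnP #|U|; elim: m => // m IH in U z *; rewrite ltnS => leUm.
have [->|[i iU]] := set_0Vmem U; first by rewrite !condE_set0.
rewrite -(setD1K iU); have iU' : i \notin U :\ i by rewrite !inE eqxx.
have ltU : (#|U :\ i| < m)%N by rewrite (cardsD1 i U) iU add1n in leUm.
rewrite !condE_setU1 //.
have sections w := FG_sections i (splice (U :\ i) w z).
apply: le_trans (C_correlated (C_cone prod_mass_ge0 sections)) _.
apply: ler_sum => k _; apply: ler_wpM2l => //.
rewrite -!condE_set_coord // -(condE_set_coord (fun w => F w * G w)) //.
exact: IH.
Qed.

Theorem harris_inequality :
  (\sum_w prod_mass w * F w) * (\sum_w prod_mass w * G w) <=
  \sum_w prod_mass w * (F w * G w).
Proof.
case: (pickP (@predT conf)) => [z _ | conf0]; last by rewrite !big_pred0 // mulr0.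
by have := condE_correlated setT z; rewrite !condE_setT.
Qed.

End Harris.

End ProductMeasure.

Lemma four_point_correlation (R : realFieldType) (p q a b c d a' b' c' d' : R) :
  0 <= q -> q <= p -> p + q + q + p = 1 ->
  a <= b -> b <= d -> a <= c -> c <= d ->
  a' <= b' -> b' <= d' -> a' <= c' -> c' <= d' ->
  (p * d + q * b + q * c + p * a) * (p * d' + q * b' + q * c' + p * a') <=
  p * (d * d') + q * (b * b') + q * (c * c') + p * (a * a').
Proof.
move=> q_ge0 q_le_p pq1 ab bd ac cd ab' bd' ac' cd'.
have gap : p * (d * d') + q * (b * b') + q * (c * c') + p * (a * a') -
  (p * d + q * b + q * c + p * a) * (p * d' + q * b' + q * c' + p * a') =
  p * p * ((d - a) * (d' - a')) + q * q * ((b - c) * (b' - c')) +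
  p * q * ((b - a) * (b' - a') + (c - a) * (c' - a') +
           (d - b) * (d' - b') + (d - c) * (d' - c')).
  by rewrite -[X in X - _]mulr1 -pq1; ring.
rewrite -subr_ge0 gap.
set X := (d - a) * (d' - a'); set Y := (b - c) * (b' - c'); set Z := (_ + _ + _ + _).
have X_ge0 : 0 <= X by rewrite /X; nra.
have XY_ge0 : 0 <= X + Y by rewrite /X /Y; nra.
have Z_ge0 : 0 <= Z by rewrite /Z; nra.
have sq : q * q <= p * p by nra.
(* Only the incomparable pair (b, c) contributes a possibly negative term [Y]; it is
   absorbed by the comparable pair (a, d) since [X + Y >= 0] and [q^2 <= p^2]. *)
have -> : p * p * X + q * q * Y + p * q * Z =
          (p * p - q * q) * X + q * q * (X + Y) + p * q * Z by ring.
by rewrite !addr_ge0 // mulr_ge0 // ?subr_ge0 //; nra.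
Qed.

Section FlipLaw.

Variables (R : realFieldType) (t : R).
Hypotheses (t_ge0 : 0 <= t) (t_le_half : t <= 2%:R^-1).

Definition flip_law (k : bool * bool) : R :=
  2%:R^-1 * (if k.1 == k.2 then 1 - t else t).

Lemma sum_bool2 (f : bool * bool -> R) :
  \sum_k f k = f (true, true) + f (true, false) + f (false, true) + f (false, false).
Proof.
transitivity (\sum_a \sum_b f (a, b)); first by rewrite pair_bigA; apply: eq_bigr => -[].
by rewrite !big_bool /= !addrA.
Qed.

Lemma flip_law_ge0 k : 0 <= flip_law k.
Proof.
have t_le1 : t <= 1 by rewrite (le_trans t_le_half) // invf_le1 ?ler1n ?ltr0n.
by apply: mulr_ge0; [rewrite invr_ge0 ler0n | case: ifP; rewrite ?subr_ge0].
Qed.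

Lemma flip_law_sum1 : \sum_k flip_law k = 1.
Proof. by rewrite sum_bool2 /flip_law /=; field. Qed.

Definition incr2 (f : bool * bool -> R) : Prop :=
  (forall b, f (false, b) <= f (true, b)) /\ (forall a, f (a, false) <= f (a, true)).

Definition decr2 (f : bool * bool -> R) : Prop :=
  (forall b, f (true, b) <= f (false, b)) /\ (forall a, f (a, true) <= f (a, false)).

Lemma flip_law_incr_correlated (f g : bool * bool -> R) : incr2 f -> incr2 g ->
  (\sum_k flip_law k * f k) * (\sum_k flip_law k * g k) <=
  \sum_k flip_law k * (f k * g k).
Proof.
move=> [f1 f2] [g1 g2]; rewrite !sum_bool2 /flip_law /=.
apply: four_point_correlation => //.
- by rewrite mulr_ge0 // invr_ge0 ler0n.
- rewrite ler_wpM2l ?invr_ge0 ?ler0n // lerBrDr [leRHS](splitr 1) mul1r.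
  by rewrite lerD.
- by field.
Qed.

Lemma flip_law_decr_correlated (f g : bool * bool -> R) : decr2 f -> decr2 g ->
  (\sum_k flip_law k * f k) * (\sum_k flip_law k * g k) <=
  \sum_k flip_law k * (f k * g k).
Proof.
move=> [f1 f2] [g1 g2].
have := @flip_law_incr_correlated (fun k => - f k) (fun k => - g k).
rewrite !sum_bool2 !mulrNN !mulrN -!opprD mulrNN.
by apply; split=> ?; rewrite lerN2.
Qed.

Section Combinations.

Variables (I : finType) (c : I -> R) (f : I -> bool * bool -> R).
Hypothesis c_ge0 : forall w, 0 <= c w.

Lemma incr2_sum : (forall w, incr2 (f w)) -> incr2 (fun k => \sum_w c w * f w k).
Proof.
by move=> fi; split=> ?; apply: ler_sum => w _; apply: ler_wpM2l => //; apply fi.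
Qed.

Lemma decr2_sum : (forall w, decr2 (f w)) -> decr2 (fun k => \sum_w c w * f w k).
Proof.
by move=> fd; split=> ?; apply: ler_sum => w _; apply: ler_wpM2l => //; apply fd.
Qed.

Lemma const_sum : (forall w k k', f w k = f w k') ->
  forall k k', \sum_w c w * f w k = \sum_w c w * f w k'.
Proof. by move=> fc k k'; apply: eq_bigr => w _; rewrite (fc w k k'). Qed.

End Combinations.

Variables (n : nat) (A B S T : {set 'I_n}).

Definition monotone_class (i : 'I_n) (f g : bool * bool -> R) : Prop :=
  [/\ i \in S -> incr2 f /\ incr2 g, i \in T -> decr2 f /\ decr2 g,
      i \notin A :|: S :|: T -> forall k k', f k = f k' &
      i \notin B :|: S :|: T -> forall k k', g k = g k'].

Lemma monotone_class_cone i (c : {ffun 'I_n -> bool * bool} -> R) f g :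
  (forall w, 0 <= c w) -> (forall w, monotone_class i (f w) (g w)) ->
  monotone_class i (fun k => \sum_w c w * f w k) (fun k => \sum_w c w * g w k).
Proof.
move=> c_ge0 fg; split=> [iS|iT|iA|iB].
- by split; apply: incr2_sum => // w; case: (fg w) => /(_ iS)[].
- by split; apply: decr2_sum => // w; case: (fg w) => _ /(_ iT)[].
- by apply: const_sum => w; case: (fg w) => _ _ /(_ iA).
- by apply: const_sum => w; case: (fg w) => _ _ _ /(_ iB).
Qed.

Lemma monotone_class_correlated i f g : [disjoint A & B] -> monotone_class i f g ->
  (\sum_k flip_law k * f k) * (\sum_k flip_law k * g k) <=
  \sum_k flip_law k * (f k * g k).
Proof.
move=> dAB [fgS fgT fA gB].
have [iS|iS] := boolP (i \in S); first by case: (fgS iS); exact: flip_law_incr_correlated.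
have [iT|iT] := boolP (i \in T); first by case: (fgT iT); exact: flip_law_decr_correlated.
have [iA|iA] := boolP (i \in A).
  have iB : i \notin B :|: S :|: T by rewrite !inE (disjointFr dAB iA) (negbTE iS) (negbTE iT).
  by rewrite (mean_mul_const_r flip_law_sum1 f (fun k => gB iB k (true, true))).
have iA' : i \notin A :|: S :|: T by rewrite !inE (negbTE iA) (negbTE iS) (negbTE iT).
by rewrite (mean_mul_const_l flip_law_sum1 g (fun k => fA iA' k (true, true))).
Qed.

End FlipLaw.

Section Coupling.

Variable n : nat.
Local Notation pconf := {ffun 'I_n -> bool * bool}.

Definition conf_fst (w : pconf) : config n := [ffun j => (w j).1].
Definition conf_snd (w : pconf) : config n := [ffun j => (w j).2].

Lemma conf_fst_set_coord (w : pconf) i k :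
  conf_fst (set_coord w i k) = setc (conf_fst w) i k.1.
Proof. by apply/ffunP => j; rewrite !ffunE; case: eqP. Qed.

Lemma conf_snd_set_coord (w : pconf) i k :
  conf_snd (set_coord w i k) = setc (conf_snd w) i k.2.
Proof. by apply/ffunP => j; rewrite !ffunE; case: eqP. Qed.

Lemma Ejoint_prod_mass (R : realFieldType) (t : R) (H : config n -> config n -> R) :
  Ejoint t H = \sum_w prod_mass (flip_law t) w * H (conf_fst w) (conf_snd w).
Proof.
rewrite /Ejoint pair_bigA /=.
rewrite (reindex (fun w : pconf => (conf_fst w, conf_snd w))) /=; last first.
  apply: onW_bij; exists (fun p : config n * config n => [ffun j => (p.1 j, p.2 j)]).
    by move=> w; apply/ffunP => j; rewrite !ffunE -surjective_pairing.
  by move=> [x y] /=; congr pair; apply/ffunP => j; rewrite !ffunE.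
apply: eq_bigr => w _; congr (_ * _).
rewrite /pjoint /prod_mass /flip_law big_split /= prodr_const card_ord exprVn.
by congr (_ * _); apply: eq_bigr => j _; rewrite !ffunE.
Qed.

Lemma monotone_class_sections (R : realFieldType) (A B S T : {set 'I_n})
    (F G : config n -> config n -> R) :
  depends_only (A :|: S :|: T) F -> depends_only (B :|: S :|: T) G ->
  S_increasing S F -> T_decreasing T F -> S_increasing S G -> T_decreasing T G ->
  forall i w, monotone_class A B S T i
    (fun k => F (conf_fst (set_coord w i k)) (conf_snd (set_coord w i k)))
    (fun k => G (conf_fst (set_coord w i k)) (conf_snd (set_coord w i k))).
Proof.
move=> DF DG SF TF SG TG i w.
have const_off D (H : config n -> config n -> R) : depends_only D H -> i \notin D ->
    forall k k', H (conf_fst (set_coord w i k)) (conf_snd (set_coord w i k)) =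
                 H (conf_fst (set_coord w i k')) (conf_snd (set_coord w i k')).
  move=> DH iD k k'; apply: DH => j jD.
  have /negbTE ji : j != i by apply: contraNneq iD => <-.
  by rewrite !conf_fst_set_coord !conf_snd_set_coord !ffunE ji.
split=> [iS|iT|iA|iB].
- by split; split=> b; rewrite /= !conf_fst_set_coord !conf_snd_set_coord;
    [apply: (SF _ _ _ iS).1 | apply: (SF _ _ _ iS).2
    | apply: (SG _ _ _ iS).1 | apply: (SG _ _ _ iS).2].
- by split; split=> b; rewrite /= !conf_fst_set_coord !conf_snd_set_coord;
    [apply: (TF _ _ _ iT).1 | apply: (TF _ _ _ iT).2
    | apply: (TG _ _ _ iT).1 | apply: (TG _ _ _ iT).2].
- exact: const_off DF iA.
- exact: const_off DG iB.
Qed.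

End Coupling.

(* Only the disjointness of [A] and [B] matters: on [S] and [T] the monotonicity
   hypotheses are used directly. *)
Theorem proposition3 (R : realFieldType) (n : nat) (t : R)
  (A B S T : {set 'I_n}) (F G : config n -> config n -> R) :
  0 <= t -> t <= 2%:R^-1 ->
  [disjoint A & B] -> [disjoint A & S] -> [disjoint A & T] ->
  [disjoint B & S] -> [disjoint B & T] -> [disjoint S & T] ->
  depends_only (A :|: S :|: T) F ->
  depends_only (B :|: S :|: T) G ->
  S_increasing S F -> T_decreasing T F ->
  S_increasing S G -> T_decreasing T G ->
  Ejoint t (fun x y => F x y * G x y) >= Ejoint t F * Ejoint t G.
Proof.
move=> t_ge0 t_le_half dAB _ _ _ _ _ DF DG SF TF SG TG.
rewrite !Ejoint_prod_mass.
apply: (harris_inequality (flip_law_ge0 t_ge0 t_le_half) (flip_law_sum1 t)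
          (C := monotone_class A B S T)).
- exact: monotone_class_cone.
- by move=> i f g; apply: monotone_class_correlated.
- exact: monotone_class_sections.
Qed.
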